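(* Let $\mathcal{A}$ be a nontrivial abelian group. Let $M_{11}(p_1,p_2)$ be the graph consisting of the $5$-cycle $v_1v_2v_3v_4v_5v_1$ and the triangle $v_1v_6v_7$ (sharing the vertex $v_1$), together with $p_1\ge0$ pendant vertices adjacent to $v_1$ and $p_2\ge 0$ pendant vertices adjacent to $v_2$. Then $M_{11}(p_1,p_2)$ is $\mathcal{A}$-vertex magic if and only if $p_1=p_2=0$. Further, $M_{11}(0,0)$ is group vertex magic.
   Context: A map $\ell:V(G)\to\mathcal{A}\setminus\{0\}$ is an $\mathcal{A}$-vertex magic labeling if there is $\mu\in\mathcal{A}$ with $\sum_{u\in N(v)}\ell(u)=\mu$ for every vertex $v$; $G$ is $\mathcal{A}$-vertex magic if such a labeling exists, and group vertex magic if it is $\mathcal{A}$-vertex magic for every nontrivial abelian group $\mathcal{A}$. A pendant vertex has degree $1$. *)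

From HB Require Import structures.
From mathcomp Require Import all_boot all_order all_algebra.
Set Implicit Arguments. Unset Strict Implicit. Unset Printing Implicit Defensive.
Import GRing.Theory.
Local Open Scope ring_scope.

Definition vertex_magic (A : zmodType) (T : finType) (e : rel T) : Prop :=
  exists l : T -> A, (forall v, l v != 0) /\
    exists mu : A, forall v, \sum_(u | e v u) l u = mu.

Definition nontrivial_group (A : zmodType) : Prop := exists a : A, a != 0.

Definition group_vertex_magic (T : finType) (e : rel T) : Prop :=
  forall A : zmodType, nontrivial_group A -> vertex_magic A e.

Local Close Scope ring_scope.

(* M_11(p1,p2) on vertex set {0,...,6+p1+p2}:
   0..6 = v1..v7; 7..6+p1 pendants at v1 (=0); 7+p1..6+p1+p2 pendants at v2 (=1).
   Oriented edge list (before symmetrisation). *)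
Definition M11_edge (p1 p2 : nat) (a b : nat) : bool :=
  [|| (a == 0) && (b == 1)%N, (a == 1) && (b == 2)%N, (a == 2) && (b == 3)%N,
      (a == 3) && (b == 4)%N, (a == 4) && (b == 0)%N,
      (a == 0) && (b == 5)%N, (a == 5) && (b == 6)%N, (a == 6) && (b == 0)%N,
      (a == 0) && (7 <= b < 7 + p1)%N
    | (a == 1) && (7 + p1 <= b < 7 + p1 + p2)%N].

Definition M11 (p1 p2 : nat) : rel 'I_(7 + p1 + p2) :=
  fun x y => M11_edge p1 p2 x y || M11_edge p1 p2 y x.

Arguments M11 : clear implicits.
Arguments M11_edge : clear implicits.

From mathcomp Require Import all_boot all_algebra zify.
Import GRing.Theory.

(* If a vertex v carries a pendant vertex, the pendant's neighbourhood sum is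
   l(v), so l(v) = mu; a vertex whose neighbourhood is exactly {v, y} then
   forces l(y) = 0.  In M_11(p1, p2) the vertex v6 has neighbourhood {v1, v7}
   and v3 has neighbourhood {v2, v4}, so no pendant may hang at v1 or v2.
   For p1 = p2 = 0, labelling v1, v2, v5 by a and the other vertices by -a
   makes every neighbourhood sum 0. *)

Lemma big_pred2 [R : Type] [idx : R] [op : Monoid.com_law idx] [I : finType]
    (i j : I) [P : pred I] [F : I -> R] :
  i != j -> P =1 pred2 i j -> \big[op/idx]_(k | P k) F k = op (F i) (F j).
Proof.
move=> neq_ij eqP2; rewrite (bigD1 i) ?eqP2 /= ?eqxx //; congr (op _ _).
apply: big_pred1 => k; rewrite eqP2 /=.
by case: (eqVneq k i) => [->|] /=; rewrite ?(negbTE neq_ij) ?andbT.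
Qed.

Lemma pendant_next_to_degree2_not_magic [A : zmodType] [T : finType]
    [e : rel T] [w x v y : T] :
  v != y -> e w =1 pred1 v -> e x =1 pred2 v y -> ~ vertex_magic A e.
Proof.
move=> neq_vy Nw Nx [l [l_neq0 [mu magic]]].
have lv : l v = mu by rewrite -(magic w) (big_pred1 v).
have : (l v + l y)%R = mu by rewrite -(magic x) (big_pred2 _ _ neq_vy Nx).
by rewrite lv -[RHS]addr0 => /GRing.addrI ly0; move/eqP: (l_neq0 y).
Qed.

Section M11Neighbourhoods.
Variables p1 p2 : nat.

Local Notation vtx k := (@inord (6 + p1 + p2) k : 'I_(7 + p1 + p2)).

Lemma val_vtx k : k < 7 + p1 + p2 -> val (vtx k) = k.
Proof. exact: inordK. Qed.

Lemma M11_v6 : M11 p1 p2 (vtx 5) =1 pred2 (vtx 0) (vtx 6).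
Proof.
move=> u; rewrite /= -!val_eqE /M11 !val_vtx; try lia.
by case: u => u _ /=; rewrite /M11_edge; lia.
Qed.

Lemma M11_v3 : M11 p1 p2 (vtx 2) =1 pred2 (vtx 1) (vtx 3).
Proof.
move=> u; rewrite /= -!val_eqE /M11 !val_vtx; try lia.
by case: u => u _ /=; rewrite /M11_edge; lia.
Qed.

Lemma M11_pendant_v1 : 0 < p1 -> M11 p1 p2 (vtx 7) =1 pred1 (vtx 0).
Proof.
move=> p1_gt0 u; rewrite /= -!val_eqE /M11 !val_vtx; try lia.
by case: u => u _ /=; rewrite /M11_edge; lia.
Qed.

Lemma M11_pendant_v2 : 0 < p2 -> M11 p1 p2 (vtx (7 + p1)) =1 pred1 (vtx 1).
Proof.
move=> p2_gt0 u; rewrite /= -!val_eqE /M11 !val_vtx; try lia.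
by case: u => u _ /=; rewrite /M11_edge; lia.
Qed.

Lemma M11_not_magic (A : zmodType) : 0 < p1 + p2 -> ~ vertex_magic A (M11 p1 p2).
Proof.
move=> sum_gt0; have [p1_0|p1_gt0] := posnP p1.
  have p2_gt0 : 0 < p2 by lia.
  apply: pendant_next_to_degree2_not_magic _ (M11_pendant_v2 p2_gt0) M11_v3.
  by rewrite -val_eqE /= !val_vtx //; lia.
apply: pendant_next_to_degree2_not_magic _ (M11_pendant_v1 p1_gt0) M11_v6.
by rewrite -val_eqE /= !val_vtx //; lia.
Qed.

End M11Neighbourhoods.

Lemma M11_00_magic (A : zmodType) (a : A) : a != 0%R -> vertex_magic A (M11 0 0).
Proof.
move=> a_neq0; exists (fun v : 'I_7 => if val v \in [:: 0; 1; 4] then a else (- a)%R).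
split; first by move=> v; case: ifP; rewrite ?oppr_eq0.
exists 0%R => v; rewrite big_mkcond /= !big_ord_recl big_ord0 /=.
case: v => [[|[|[|[|[|[|[|?]]]]]]] ?] //=; rewrite /M11 /M11_edge /=.
all: by rewrite ?(add0r, addr0) ?addrA ?addrK ?subrr ?addNr.
Qed.

Theorem proposition4p13 :
  (forall (A : zmodType), nontrivial_group A ->
     forall p1 p2 : nat, vertex_magic A (M11 p1 p2) <-> (p1 = 0%N /\ p2 = 0%N))
  /\ group_vertex_magic (M11 0 0).
Proof.
split; last by move=> A [a a_neq0]; exact: M11_00_magic a_neq0.
move=> A [a a_neq0] p1 p2; split; last by case=> -> ->; exact: M11_00_magic a_neq0.
move=> magic; have [sum0|sum_gt0] := posnP (p1 + p2); first by split; lia.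
by case: (M11_not_magic _ _ _ sum_gt0 magic).
Qed.
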